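(* Fix a scenario $s\in S$. Let $\Pi_s\subseteq\mathbb{R}^{n+1}$ be any neighborhood of the origin and let $\Pi_s^*=\Pi_s\cap(\mathbb{R}^n\times\mathbb{R}_+)$. Define $$\bar P_s:=\Big\{(x,\theta_s)\in\mathbb{R}^n\times\mathbb{R}:\ \lambda^Tx+\theta_s\ge \overline{Q}_s^*(\lambda,1)\ \text{ and }\ \lambda^Tx\ge \phi_s(\lambda)\ \text{ for all }\lambda\in\mathbb{R}^n\Big\}.$$ Then $P_s(\Pi_s^* )=\bar P_s$.
   Context: Two-stage stochastic integer program with finite scenario set $S$ and probabilities $p_s>0$, $\sum_{s\in S}p_s=1$. Data: $c\in\mathbb{R}^n$, matrix $A$ and vector $b$, and for each $s\in S$ matrices $T^s,W^s$ and vectors $h^s,q^s$ (all data rational). $X=\{x\in\mathbb{R}^n: x_j\in\mathbb{Z},\ j\in J_X\}$ and $Y=\{y\in\mathbb{R}^{n_y}: y_j\in\mathbb{Z},\ j\in J_Y\}$ for given index sets $J_X,J_Y$. For each $s$, $K^s:=\{(x,y)\in X\times Y: Ax\ge b,\ T^sx+W^sy\ge h^s\}$, assumed nonempty and bounded. Define $\overline{Q}_s^*:\mathbb{R}^n\times\mathbb{R}_+\to\mathbb{R}$ by $\overline{Q}_s^*(\pi,\pi_0)=\min\{\pi^Tx+\pi_0(q^s)^Ty:(x,y)\in K^s\}$. For $\Pi\subseteq\mathbb{R}^n\times\mathbb{R}_+$, $P_s(\Pi):=\{(x,\theta_s)\in\mathbb{R}^n\times\mathbb{R}:\ \pi^Tx+\pi_0\theta_s\ge\overline{Q}_s^*(\pi,\pi_0)\text{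 for all }(\pi,\pi_0)\in\Pi\}$. For $\lambda\in\mathbb{R}^n$, $\phi_s(\lambda):=\inf\{\mathbb{1}^Tv+\mathbb{1}^Tu+\lambda^Tx:\ Ax+u\ge b,\ T^sx+W^sy+v\ge h^s,\ x\in X,\ y\in Y,\ u\ge0,\ v\ge 0\}\in\mathbb{R}\cup\{-\infty\}$ (the inequality $\lambda^Tx\ge\phi_s(\lambda)$ is the Lagrangian feasibility cut; $\lambda^Tx+\theta_s\ge\overline{Q}_s^*(\lambda,1)$ is the Lagrangian optimality cut). *)

From HB Require Import structures.
From mathcomp Require Import all_boot all_order all_algebra.
From mathcomp Require Import all_classical all_reals all_analysis.
Set Implicit Arguments. Unset Strict Implicit. Unset Printing Implicit Defensive.
Import Order.TTheory GRing.Theory Num.Theory.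
Import numFieldNormedType.Exports.
Local Open Scope classical_set_scope.
Local Open Scope ring_scope.

Section Defs.
Variable R : realType.

Definition toR (m n : nat) (M : 'M[rat]_(m, n)) : 'M[R]_(m, n) := map_mx (@ratr R) M.

Definition dotv (n : nat) (u v : 'cV[R]_n) : R := \sum_(i < n) u i 0 * v i 0.

Definition sumv (n : nat) (v : 'cV[R]_n) : R := \sum_(i < n) v i 0.

Definition mxge (m n : nat) (u v : 'M[R]_(m, n)) : Prop := forall i j, v i j <= u i j.

Definition intset (n : nat) (J : {set 'I_n}) : set 'cV[R]_n :=
  [set x | forall j, j \in J -> x j 0 \is a Num.int].

Definition Kset (n ny m k : nat) (A : 'M[rat]_(m, n)) (b : 'cV[rat]_m)
  (T : 'M[rat]_(k, n)) (W : 'M[rat]_(k, ny)) (h : 'cV[rat]_k)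
  (JX : {set 'I_n}) (JY : {set 'I_ny}) : set ('cV[R]_n * 'cV[R]_ny) :=
  [set xy | [/\ intset JX xy.1, intset JY xy.2,
              mxge (toR A *m xy.1) (toR b) &
              mxge (toR T *m xy.1 + toR W *m xy.2) (toR h)]].

Definition bounded_pairs (n ny : nat) (K : set ('cV[R]_n * 'cV[R]_ny)) : Prop :=
  exists M : R, forall xy, K xy ->
    (forall i, `|xy.1 i 0| <= M) /\ (forall i, `|xy.2 i 0| <= M).

(* \bar{Q}^*_s(pi, pi0) = min {pi^T x + pi0 q^T y : (x,y) in K^s}
   (written as an infimum in the extended reals; it is attained under the
   standing assumptions) *)
Definition Qstar (n ny : nat) (K : set ('cV[R]_n * 'cV[R]_ny)) (q : 'cV[rat]_ny)
  (pi : 'cV[R]_n) (pi0 : R) : \bar R :=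
  ereal_inf [set ((dotv pi xy.1 + pi0 * dotv (toR q) xy.2)%:E) | xy in K].

Definition phi (n ny m k : nat) (A : 'M[rat]_(m, n)) (b : 'cV[rat]_m)
  (T : 'M[rat]_(k, n)) (W : 'M[rat]_(k, ny)) (h : 'cV[rat]_k)
  (JX : {set 'I_n}) (JY : {set 'I_ny}) (lam : 'cV[R]_n) : \bar R :=
  ereal_inf [set ((sumv z.2 + sumv z.1.2 + dotv lam z.1.1.1)%:E) |
     z in [set z : 'cV[R]_n * 'cV[R]_ny * 'cV[R]_m * 'cV[R]_k |
       [/\ mxge (toR A *m z.1.1.1 + z.1.2) (toR b),
           mxge (toR T *m z.1.1.1 + toR W *m z.1.1.2 + z.2) (toR h),
           intset JX z.1.1.1 /\ intset JY z.1.1.2,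
           mxge z.1.2 0 & mxge z.2 0]]].

Definition Pset (n ny : nat) (K : set ('cV[R]_n * 'cV[R]_ny)) (q : 'cV[rat]_ny)
  (Pi : set ('cV[R]_n * R)) : set ('cV[R]_n * R) :=
  [set xt | forall pp, Pi pp -> pp.2 >= 0 ->
     (Qstar K q pp.1 pp.2 <= (dotv pp.1 xt.1 + pp.2 * xt.2)%:E)%E].

Definition Pbar (n ny m k : nat) (A : 'M[rat]_(m, n)) (b : 'cV[rat]_m)
  (T : 'M[rat]_(k, n)) (W : 'M[rat]_(k, ny)) (h : 'cV[rat]_k) (q : 'cV[rat]_ny)
  (JX : {set 'I_n}) (JY : {set 'I_ny}) : set ('cV[R]_n * R) :=
  [set xt | forall lam : 'cV[R]_n,
     (Qstar (Kset A b T W h JX JY) q lam 1 <= (dotv lam xt.1 + xt.2)%:E)%E /\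
     (phi A b T W h JX JY lam <= (dotv lam xt.1)%:E)%E].

End Defs.

(* The argument rests on positive homogeneity of the value function:
   Q^*_s(t pi, t pi0) = t Q^*_s(pi, pi0) for t > 0, so the validity of a cut at
   (x, theta) only depends on the ray spanned by (pi, pi0).  Every ray meets
   the neighbourhood Pi, hence P_s(Pi') is the set satisfying the cuts for
   ALL (pi, pi0) with pi0 >= 0.
   - Cuts with pi0 > 0 are rescalings of optimality cuts (pi0 = 1).
   - Cuts with pi0 = 0 are limits of cuts with small pi0 > 0, because
     q^T y is bounded on the bounded set K^s; conversely they dominate the
     feasibility cuts, since phi_s(lambda) <= Q^*_s(lambda, 0) (take zero
     slacks). *)
From HB Require Import structures.
From mathcomp Require Import all_boot all_order all_algebra.
From mathcomp Require Import all_classical all_reals all_analysis.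
Import Order.TTheory GRing.Theory Num.Theory.
Import numFieldNormedType.Exports.
Local Open Scope classical_set_scope.
Local Open Scope ring_scope.

Lemma nbhs0_ray {R : realType} {n} {Pi : set ('cV[R]_n * R)} (lam : 'cV[R]_n)
    (a : R) :
  nbhs ((0 : 'cV[R]_n), (0 : R)) Pi -> exists2 t : R, 0 < t & Pi (t *: lam, t * a).
Proof.
move=> Pi0.
have ray_cvg : (t *: lam, t * a) @[t --> (0 : R)] --> ((0 : 'cV[R]_n), (0 : R)).
  apply: (@cvg_pair _ _ _ (nbhs (0 : R)) (nbhs (0 : 'cV[R]_n)) (nbhs (0 : R))).
  - have := @cvgZr_tmp _ _ _ (nbhs (0 : R)) _ id 0 lam cvg_id.
    rewrite scale0r; exact.
  - have := @cvgMr_tmp _ _ (nbhs (0 : R)) _ id 0 a cvg_id.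
    rewrite mul0r; exact.
have [t [t_gt0 Pit]] : exists t : R, 0 < t /\ Pi (t *: lam, t * a).
  apply: (@filter_ex _ (0 : R)^'+); near=> t.
  split; first by near: t; exact: nbhs_right_gt.
  by near: t; exact: (cvg_at_right_filter ray_cvg Pi0).
by exists t.
Unshelve. all: by end_near. Qed.

Lemma dotvZ (R : realType) n (t : R) (u v : 'cV[R]_n) :
  dotv (t *: u) v = t * dotv u v.
Proof. by rewrite /dotv mulr_sumr; apply: eq_bigr => i _; rewrite mxE mulrA. Qed.

Section ValueFunction.
Variables (R : realType) (n ny : nat) (K : set ('cV[R]_n * 'cV[R]_ny)).
Variable q : 'cV[rat]_ny.

Definition valid_cut (pi : 'cV[R]_n) (pi0 : R) (xt : 'cV[R]_n * R) : Prop :=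
  (Qstar K q pi pi0 <= (dotv pi xt.1 + pi0 * xt.2)%:E)%E.

Lemma Qstar_le pi pi0 {xy} : K xy ->
  (Qstar K q pi pi0 <= (dotv pi xy.1 + pi0 * dotv (toR R q) xy.2)%:E)%E.
Proof. by move=> Kxy; apply: ereal_inf_lbound; exists xy. Qed.

Lemma QstarZ t pi pi0 : 0 < t ->
  Qstar K q (t *: pi) (t * pi0) = (t%:E * Qstar K q pi pi0)%E.
Proof.
move=> t_gt0; rewrite /Qstar -ereal_inf_pZl // image_comp.
congr ereal_inf; apply: eq_imagel => xy _ /=.
by rewrite dotvZ -EFinM mulrDr mulrA.
Qed.

Lemma valid_cutZ t pi pi0 xt : 0 < t ->
  valid_cut (t *: pi) (t * pi0) xt <-> valid_cut pi pi0 xt.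
Proof.
move=> t_gt0; rewrite /valid_cut QstarZ // dotvZ -mulrA -mulrDr EFinM.
by rewrite lee_pmul2l.
Qed.

Lemma valid_cut_pos xt pi pi0 : (forall lam, valid_cut lam 1 xt) -> 0 < pi0 ->
  valid_cut pi pi0 xt.
Proof.
move=> opt pi0_gt0; have := (valid_cutZ pi0 (pi0^-1 *: pi) 1 xt pi0_gt0).2 (opt _).
by rewrite scalerA mulfV ?gt_eqF // scale1r mulr1.
Qed.

Lemma Qstar_slack {B a : R} pi :
  (forall xy, K xy -> `|dotv (toR R q) xy.2| <= B) -> 0 <= a ->
  (Qstar K q pi 0 <= Qstar K q pi a + (a * B)%:E)%E.
Proof.
move=> qB a_ge0; rewrite -leeBlDr //; apply/ereal_infP => _ [xy Kxy <-].
rewrite leeBlDr // -EFinD; apply: le_trans (Qstar_le pi 0 Kxy) _.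
rewrite lee_fin mul0r addr0 -addrA lerDl -mulrDr mulr_ge0 //.
have := qB _ Kxy; rewrite ler_norml => /andP[qB_lo _].
by rewrite -lerBlDr sub0r.
Qed.

Lemma valid_cut_recession (B : R) pi xt :
  (forall xy, K xy -> `|dotv (toR R q) xy.2| <= B) ->
  (forall a, 0 < a -> valid_cut pi a xt) -> valid_cut pi 0 xt.
Proof.
move=> qB cuts; rewrite /valid_cut mul0r addr0; apply/lee_addgt0Pr => e e_gt0.
set c := xt.2 + B; set a := e / (`|c| + 1).
have a_gt0 : 0 < a by rewrite divr_gt0 // ltr_pwDr.
have ac_le_e : a * c <= e.
  rewrite /a mulrAC ler_pdivrMr ?ltr_pwDr // ler_wpM2l ?ltW //.
  by rewrite (le_lt_trans (ler_norm c)) // ltrDl.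
apply: le_trans (Qstar_slack pi qB (ltW a_gt0)) _.
apply: le_trans (leeD (cuts a a_gt0) (lexx _)) _.
by rewrite -!EFinD lee_fin -addrA lerD2l -mulrDr.
Qed.

End ValueFunction.

Arguments valid_cut {R n ny} K q pi pi0 xt.
Arguments valid_cutZ {R n ny K q} t pi pi0 xt.
Arguments valid_cut_recession {R n ny K q B pi xt}.

Lemma bounded_recourse {R : realType} {n ny} {K : set ('cV[R]_n * 'cV[R]_ny)}
    (q : 'cV[rat]_ny) :
  bounded_pairs K -> exists B : R, forall xy, K xy -> `|dotv (toR R q) xy.2| <= B.
Proof.
move=> [M KM]; exists (\sum_(i < ny) `|toR R q i 0| * `|M|) => xy /KM [_ yM].
apply: le_trans (ler_norm_sum _ _ _) _; apply: ler_sum => i _.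
by rewrite normrM ler_wpM2l // (le_trans (yM i)) // ler_norm.
Qed.

(* phi_s(lambda) <= Q^*(lambda, 0): every point of K^s is feasible for the
   relaxation defining phi_s with zero slacks. *)
Lemma phi_le_Qstar0 {R : realType} {n ny m k} (A : 'M[rat]_(m, n)) (b : 'cV[rat]_m)
    (T : 'M[rat]_(k, n)) (W : 'M[rat]_(k, ny)) (h : 'cV[rat]_k) (q : 'cV[rat]_ny)
    (JX : {set 'I_n}) (JY : {set 'I_ny}) (lam : 'cV[R]_n) :
  (phi A b T W h JX JY lam <= Qstar (Kset A b T W h JX JY) q lam 0)%E.
Proof.
have sumv0 l : sumv (0 : 'cV[R]_l) = 0 by rewrite /sumv big1 // => i _; rewrite mxE.
apply/ereal_infP => _ [[x y] [JXx JYy Ax TWxy] <-].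
apply: ereal_inf_lbound; exists (x, y, 0, 0).
  by split; rewrite ?addr0 // => i j; rewrite mxE.
by rewrite /= !sumv0 mul0r !addr0 add0r.
Qed.

Theorem proposition1 (R : realType) (S : finType) (n ny m : nat) (k : S -> nat)
  (p : S -> R) (c : 'cV[rat]_n) (A : 'M[rat]_(m, n)) (b : 'cV[rat]_m)
  (T : forall s, 'M[rat]_(k s, n)) (W : forall s, 'M[rat]_(k s, ny))
  (h : forall s, 'cV[rat]_(k s)) (q : forall s, 'cV[rat]_ny)
  (JX : {set 'I_n}) (JY : {set 'I_ny}) :
  (forall s, 0 < p s) -> \sum_(s : S) p s = 1 ->
  (forall s, Kset (R:=R) A b (T s) (W s) (h s) JX JY !=set0) ->
  (forall s, bounded_pairs (Kset (R:=R) A b (T s) (W s) (h s) JX JY)) ->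
  forall (s : S) (Pi : set ('cV[R]_n * R)),
    nbhs ((0 : 'cV[R]_n), (0 : R)) Pi ->
    Pset (Kset (R:=R) A b (T s) (W s) (h s) JX JY) (q s)
         (Pi `&` [set pp | 0 <= pp.2]) =
    Pbar A b (T s) (W s) (h s) (q s) JX JY.
Proof.
move=> _ _ _ Kbd s Pi Pi0; set K := Kset _ _ _ _ _ _ _.
have [B qB] := bounded_recourse (q s) (Kbd s).
rewrite /Pset /Pbar; apply/seteqP; split => xt /= cuts.
- (* each cut direction (lam, 1) or (lam, 0) has a representative in Pi *)
  have ray_cut (a : R) (lam : 'cV[R]_n) : 0 <= a -> valid_cut K (q s) lam a xt.
    move=> a_ge0; have [t t_gt0 Pit] := nbhs0_ray lam a Pi0.
    have ta_ge0 : 0 <= t * a := mulr_ge0 (ltW t_gt0) a_ge0.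
    exact/(valid_cutZ _ _ _ _ t_gt0)/(cuts _ (conj Pit ta_ge0) ta_ge0).
  move=> lam; split.
    by have := ray_cut 1 lam ler01; rewrite /valid_cut mul1r.
  apply: le_trans (phi_le_Qstar0 _ _ _ _ _ (q s) _ _ lam) _.
  by have := ray_cut 0 lam (lexx 0); rewrite /valid_cut mul0r addr0.
- (* the optimality cuts generate all cuts with pi0 > 0, and in the limit
     those with pi0 = 0 *)
  have opt (lam : 'cV[R]_n) : valid_cut K (q s) lam 1 xt.
    by rewrite /valid_cut mul1r; case: (cuts lam).
  move=> [pi pi0] _ /=; rewrite le_eqVlt => /orP [/eqP <- | pi0_gt0].
  + apply: (valid_cut_recession qB) => a a_gt0; exact: valid_cut_pos.
  + exact: valid_cut_pos.
Qed.
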